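(* Let $G$ be a graph and $\mathscr{C}$ a skew graph category such that $(G,\emptyset,\emptyset)\in\mathscr{C}$. Then for all $k,l\in\mathbb{N}_0$ the vector space $\mathscr{C}^G(k,l)$ has the linear basis $\{\hat T^{\mathbf{a}\mathbf{b}}_G\mid[\mathbf{a},\mathbf{b}]\in W^{\mathscr{C}}_G(k,l)\}$.
   Context: Graphs are finite, undirected, without multiple edges, loops allowed, up to isomorphism; $N_k$ is the edgeless graph on $k$ vertices; graph homomorphisms map edges (including loops) to edges. A vertex overlap of graphs $K,H$ is a subset $f\subset V(K)\times V(H)$ in which each vertex occurs at most once; $K\cup_fH$ is the quotient of $K\sqcup H$ identifying $v$ with $w$ for $(v,w)\in f$ (edges between vertices of the quotient iff between some representatives), with induced maps $f_K,f_H$. Bilabelled graph: $(K,\mathbf{a},\mathbf{b})$, $\mathbf{a}\in V(K)^k$, $\mathbf{b}\in V(K)^l$, up to isomorphism preserving tuples; $\mathscr{C}(k,l)$ those in $\mathscr{C}$ with $k$ inputs, $l$ outputs. Operations: $f$-union $(K,\mathbf{a},\mathbf{b})\cup_f(H,\mathbf{c},\mathbf{d})=(K\cup_fH,f_K(\mathbf{a})f_H(\mathbf{c}),f_K(\mathbf{b})f_H(\mathbf{d}))$; composition (for $|\mathbf{b}|=|\mathbf{c}|$) $(H,\mathbf{c},\mathbf{d})\cdot(K,\mathbf{a},\mathbf{b})=(H\cdot K,\mathbf{a},\mathbf{d})$ with $H\cdot K$ the quotient of $K\sqcup H$ identifying $b_i$ with $c_i$; involution swaps the tuples. $\ker\mathbf{b}$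 is the partition of positions by equal entries. A skew graph category is a set of bilabelled graphs containing $(N_0,\emptyset,\emptyset)$, $(M,(v),(v))$, $(M,\emptyset,(v,v))$ ($M$ the one-vertex loopless graph with vertex $v$), closed under all $f$-unions, under compositions $\mathbf{H}\cdot\mathbf{K}$ with $\mathbf{K}=(K,\mathbf{a},\mathbf{b}),\mathbf{H}=(H,\mathbf{c},\mathbf{d})$, $\ker\mathbf{b}=\ker\mathbf{c}$, and under involution. With the vertices of $G$ labelled $1,\dots,n$, for a bilabelled graph $\mathbf{K}=(K,\mathbf{a},\mathbf{b})$ the map $\hat T^G_{\mathbf{K}}\colon(\mathbb{C}^n)^{\otimes k}\to(\mathbb{C}^n)^{\otimes l}$ has entries $[\hat T^G_{\mathbf{K}}]_{\mathbf{j}\mathbf{i}}=\#\{\phi\colon K\to G\text{ injective homomorphism}\mid\phi(\mathbf{a})=\mathbf{i},\phi(\mathbf{b})=\mathbf{j}\}$, and $\mathscr{C}^G(k,l):=\mathrm{span}\{\hat T^G_{\mathbf{K}}\mid\mathbf{K}\in\mathscr{C}(k,l)\}$. $W_G(k,l):=(V(G)^k\times V(G)^l)/\mathrm{Aut}\,G$ (diagonal action), with classes $[\mathbf{a},\mathbf{b}]$; $\hat T^{\mathbf{a}\mathbf{b}}_G:=\hat T^G_{(G,\mathbf{a},\mathbf{b})}$, which depends only on $[\mathbf{a},\mathbf{b}]$; and $W^{\mathscr{C}}_G(k,l):=\{[\mathbf{a},\mathbf{b}]\in W_G(k,l)\mid(G,\mathbf{a},\mathbf{b})\in\mathscr{C}(k,l)\}$.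 *)

From Stdlib Require List.
From HB Require Import structures.
From mathcomp Require Import all_boot all_order all_algebra fingroup perm algC.
Set Implicit Arguments. Unset Strict Implicit. Unset Printing Implicit Defensive.
Import GRing.Theory Num.Theory.

(* A (finite, undirected, loops allowed, no multi-edges) graph on the vertex
   set 'I_n.  The stored relation [adj] need not be symmetric: the edge
   relation is its symmetrisation [edge].  Loops are edges x -- x. *)
Record graph := Graph { nv : nat; adj : rel 'I_nv }.
Arguments adj : clear implicits.

Definition edge (K : graph) (x y : 'I_(nv K)) : bool := adj K x y || adj K y x.
Arguments edge : clear implicits.

Record bilab := BL { bgr : graph; bin : seq 'I_(nv bgr); bout : seq 'I_(nv bgr) }.
Arguments bin : clear implicits.
Arguments bout : clear implicits.

Definition iso_bl (X Y : bilab) : Prop :=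
  exists f : 'I_(nv (bgr X)) -> 'I_(nv (bgr Y)),
    bijective f /\
    (forall x y, edge (bgr X) x y = edge (bgr Y) (f x) (f y)) /\
    map f (bin X) = bin Y /\ map f (bout X) = bout Y.

Definition overlap (m n : nat) (R : 'I_m -> 'I_n -> Prop) : Prop :=
  (forall x y y', R x y -> R x y' -> y = y') /\
  (forall x x' y, R x y -> R x' y -> x = x').

(* [glue K H R Q gK gH]: Q, together with gK : V(K) -> V(Q), gH : V(H) -> V(Q),
   is (isomorphic to) the quotient of the disjoint union K ⊔ H obtained by
   identifying v with w whenever R v w (R a vertex overlap / partial matching),
   with edges between two vertices of the quotient iff there is an edge between
   some representatives; gK, gH are the induced maps. *)
Definition glue (K H Q : graph) (R : 'I_(nv K) -> 'I_(nv H) -> Prop)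
  (gK : 'I_(nv K) -> 'I_(nv Q)) (gH : 'I_(nv H) -> 'I_(nv Q)) : Prop :=
  injective gK /\ injective gH /\
  (forall x y, gK x = gH y <-> R x y) /\
  (forall q, (exists x, gK x = q) \/ (exists y, gH y = q)) /\
  (forall p q, edge Q p q <->
     (exists x y, [/\ gK x = p, gK y = q & edge K x y]) \/
     (exists x y, [/\ gH x = p, gH y = q & edge H x y])).

(* ker b = ker c : same length and the same positions carry equal entries. *)
Definition same_ker (m n : nat) (b : seq 'I_m) (c : seq 'I_n) : Prop :=
  size b = size c /\
  forall i j, i < size b -> j < size b ->
    (nth 0 (map val b) i == nth 0 (map val b) j) =
    (nth 0 (map val c) i == nth 0 (map val c) j).

Definition graphM : graph := @Graph 1 (fun _ _ => false).
Definition graphN0 : graph := @Graph 0 (fun _ _ => false).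
Definition vM : 'I_(nv graphM) := ord0.

(* A skew graph category: a set of isomorphism classes of bilabelled graphs,
   represented as an isomorphism-invariant predicate on bilabelled graphs. *)
Definition skew_graph_category (C : bilab -> Prop) : Prop :=
  [/\ (forall X Y, C X -> iso_bl X Y -> C Y),
      C (@BL graphN0 [::] [::]),
      C (@BL graphM [:: vM] [:: vM]),
      C (@BL graphM [::] [:: vM; vM]) &
   [/\
    (forall X Y, C X -> C Y ->
      forall (R : 'I_(nv (bgr X)) -> 'I_(nv (bgr Y)) -> Prop), overlap R ->
      forall Q gK gH, glue R gK gH ->
        C (@BL Q (map gK (bin X) ++ map gH (bin Y))
                 (map gK (bout X) ++ map gH (bout Y)))),
    (* closure under compositions Y . X with ker (bout X) = ker (bin Y) *)
    (forall X Y, C X -> C Y -> same_ker (bout X) (bin Y) ->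
      forall Q gK gH,
        glue (fun x y => (x, y) \in zip (bout X) (bin Y)) gK gH ->
        C (@BL Q (map gK (bin X)) (map gH (bout Y)))) &
    (forall X, C X -> C (@BL (bgr X) (bout X) (bin X)))]].

Section Tensors.
Variable G : graph.
Local Notation n := (nv G).

(* The space Hom((C^n)^{⊗k}, (C^n)^{⊗l}), as matrices indexed by
   (output tuple j, input tuple i).  C is modelled by algC. *)
Definition tensor_space (k l : nat) :=
  {ffun (l.-tuple 'I_n * k.-tuple 'I_n) -> algC^o}.

Definition is_inj_hom (K : graph) (phi : {ffun 'I_(nv K) -> 'I_n}) : bool :=
  injectiveb phi && [forall x, forall y, edge K x y ==> edge G (phi x) (phi y)].

Definition T_hat (k l : nat) (K : bilab) : tensor_space k l :=
  [ffun ji : l.-tuple 'I_n * k.-tuple 'I_n =>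
     ((#|[set phi : {ffun 'I_(nv (bgr K)) -> 'I_n} |
          [&& is_inj_hom phi, map phi (bin K) == val ji.2
            & map phi (bout K) == val ji.1]]|)%N%:R)%R].

Definition CG_space (C : bilab -> Prop) (k l : nat) (v : tensor_space k l) : Prop :=
  exists s : seq bilab,
    (forall K, Stdlib.Lists.List.In K s -> [/\ C K, size (bin K) = k & size (bout K) = l]) /\
    v \in <<map (T_hat k l) s>>%VS.

Definition T_ab (k l : nat) (ab : k.-tuple 'I_n * l.-tuple 'I_n) : tensor_space k l :=
  T_hat k l (@BL G (val ab.1) (val ab.2)).

Definition is_aut (s : {perm 'I_n}) : bool :=
  [forall x, forall y, edge G x y == edge G (s x) (s y)].

Definition same_orbit (k l : nat) (ab ab' : k.-tuple 'I_n * l.-tuple 'I_n) : bool :=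
  [exists s : {perm 'I_n}, [&& is_aut s, map s (val ab.1) == val ab'.1
                                 & map s (val ab.2) == val ab'.2]].

End Tensors.

Arguments is_inj_hom : clear implicits.
Arguments T_hat : clear implicits.
Arguments CG_space : clear implicits.
Arguments T_ab : clear implicits.
Arguments is_aut : clear implicits.
Arguments same_orbit : clear implicits.

From mathcomp Require Import all_boot all_order all_algebra fingroup perm algC.
Set Implicit Arguments. Unset Strict Implicit. Unset Printing Implicit Defensive.
Import GRing.Theory Num.Theory.
Local Open Scope ring_scope.

(* An injective endomorphism of the finite graph G is an automorphism.  Composing
   with these shows that |Aut G| T^G_K is the sum of the T^{phi(a) phi(b)}_G over
   the injective homomorphisms phi : K -> G, and (G, phi(a), phi(b)) lies in the
   category as the f-union of K and (G, [::], [::]) along the graph of phi; hence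
   the T^{ab}_G with (G, a, b) in the category span C^G(k, l).  The entry of
   T^{ab}_G at (b', a') is nonzero exactly when [a, b] = [a', b'], so
   representatives of distinct orbits give a diagonal, hence free, family. *)

Lemma list_In_mem (T : eqType) (x : T) (s : seq T) : List.In x s -> x \in s.
Proof. by elim: s => //= y s IH [->|/IH]; rewrite inE ?eqxx // => ->; rewrite orbT. Qed.

Lemma mem_inj_stable (T : finType) (f : T -> T) (A : {set T}) :
  injective f -> {homo f : x / x \in A} -> forall x, (f x \in A) = (x \in A).
Proof.
move=> f_inj fA x; have fAA : f @: A = A.
  apply/eqP; rewrite eqEcard card_imset // leqnn andbT.
  by apply/subsetP=> _ /imsetP[y Ay ->]; exact: fA.
by rewrite -{1}fAA mem_imset.
Qed.

Section SpanFamily.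
Variables (K : fieldType) (vT : vectType K) (I : eqType) (P : I -> Prop) (f : I -> vT).

Lemma span_map_sub_span_family (J : Type) (g : J -> vT) (js : seq J) :
  (forall j, List.In j js -> exists2 S, {in S, forall i, P i} & g j \in <<map f S>>%VS) ->
  exists2 S, {in S, forall i, P i} & (<<map g js>> <= <<map f S>>)%VS.
Proof.
elim: js => [|j js IH] hjs; first by exists [::]; rewrite // span_nil sub0v.
have [S1 P1 gj] := hjs j (or_introl erefl).
have [S2 P2 sub2] := IH (fun j' j'js => hjs j' (or_intror j'js)).
exists (S1 ++ S2) => [i|]; first by rewrite mem_cat => /orP[/P1|/P2].
rewrite /= span_cons map_cat span_cat subv_add -memvE.
by rewrite (subvP (addvSl _ _) _ gj) (subv_trans sub2 (addvSr _ _)).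
Qed.

End SpanFamily.

Lemma free_map_diag (I : eqType) (aT : finType) (K : fieldType)
    (f : I -> {ffun aT -> K^o}) (pt : I -> aT) (s : seq I) :
  uniq s -> {in s, forall x, f x (pt x) != 0} ->
  {in s &, forall x y, f x (pt y) != 0 -> x = y} ->
  free (map f s).
Proof.
elim: s => [|x s IH] /=; first by move=> *; exact: nil_free.
case/andP=> xNs s_uniq diag offdiag.
have s_sub : {subset s <= x :: s} by move=> y ys; rewrite inE ys orbT.
rewrite free_cons (IH s_uniq (sub_in1 s_sub diag) (sub_in2 s_sub offdiag)) andbT.
apply: contra (diag x (mem_head x s)) => /(@coord_span _ _ _ (in_tuple _)) ->.
rewrite sum_ffunE big1 // => i _; rewrite ffunE /=.
have i_lt : (i < size s)%N by rewrite -(size_map f).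
rewrite (nth_map x) //; apply/eqP; rewrite scaler_eq0; apply/orP; right; apply: contraNT xNs.
by move/offdiag => <-; [exact: mem_nth | exact/s_sub/mem_nth | exact: mem_head].
Qed.

Definition ffun_comp (aT : finType) (T U : Type) (g : T -> U) (f : {ffun aT -> T}) :
  {ffun aT -> U} := [ffun x => g (f x)].

Lemma ffun_comp_inj (aT : finType) (T U : Type) (g : T -> U) :
  injective g -> injective (@ffun_comp aT T U g).
Proof.
move=> g_inj f f' eq_gf; apply/ffunP=> x; apply: g_inj.
by have := congr1 (fun h : {ffun aT -> U} => h x) eq_gf; rewrite /= !ffunE.
Qed.

Lemma map_ffun_comp (aT : finType) (T U : Type) (g : T -> U) (f : {ffun aT -> T}) s :
  map (ffun_comp g f) s = map g (map f s).
Proof. by rewrite -map_comp; apply: eq_map => x; rewrite ffunE. Qed.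

Lemma overlap_graph m n (f : 'I_m -> 'I_n) : injective f -> overlap (fun x y => f x = y).
Proof. by move=> f_inj; split=> [x y y' <- <- | x x' y <- /f_inj]. Qed.

Section HomCounting.
Variable G : graph.
Local Notation n := (nv G).

Lemma inj_hom_reflect_edge (psi : {ffun 'I_n -> 'I_n}) :
  is_inj_hom G G psi -> forall x y, edge G (psi x) (psi y) = edge G x y.
Proof.
case/andP=> /injectiveP psi_inj /forallP psi_hom x y.
have pair_inj : injective (fun p : 'I_n * 'I_n => (psi p.1, psi p.2)).
  by move=> [a b] [c d] [/psi_inj -> /psi_inj ->].
pose E := [set p : 'I_n * 'I_n | edge G p.1 p.2].
(* psi permutes the finite edge set E, so it also reflects edges. *)
have /(_ _ (x, y)) := @mem_inj_stable _ _ E pair_inj; rewrite !inE; apply.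
by move=> [a b]; rewrite !inE; apply/implyP/(forallP (psi_hom a)).
Qed.

Lemma id_inj_hom : is_inj_hom G G [ffun x => x].
Proof.
apply/andP; split; first by apply/injectiveP=> x y; rewrite !ffunE.
by apply/forallP=> x; apply/forallP=> y; rewrite !ffunE implybb.
Qed.

Lemma inj_hom_comp (K : graph) (psi : {ffun 'I_n -> 'I_n}) phi :
  is_inj_hom G G psi -> is_inj_hom G K (ffun_comp psi phi) = is_inj_hom G K phi.
Proof.
move=> psi_hom; have psi_refl := inj_hom_reflect_edge psi_hom.
case/andP: psi_hom => /injectiveP psi_inj _; congr (_ && _).
  apply/injectiveP/injectiveP => [comp_inj x y eq_phi | phi_inj x y].
    by apply: comp_inj; rewrite !ffunE eq_phi.
  by rewrite !ffunE => /psi_inj /phi_inj.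
by apply: eq_forallb => x; apply: eq_forallb => y; rewrite !ffunE psi_refl.
Qed.

Lemma glue_inj_hom (K : graph) phi :
  is_inj_hom G K phi -> glue (fun x y => phi x = y) phi id.
Proof.
case/andP=> /injectiveP phi_inj /forallP phi_hom.
split; first exact: phi_inj.
split; first exact: inj_id.
split; first by [].
split; first by move=> q; right; exists q.
move=> p q; split=> [pq | [[x [y [<- <- xy]]] | [x [y [<- <- //]]]]].
  by right; exists p, q.
exact: implyP (forallP (phi_hom x) y) xy.
Qed.

Definition inj_endo := [pred psi : {ffun 'I_n -> 'I_n} | is_inj_hom G G psi].

Definition image_labels (K : bilab) (phi : {ffun 'I_(nv (bgr K)) -> 'I_n}) :=
  (map_tuple phi (in_tuple (bin K)), map_tuple phi (in_tuple (bout K))).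

Lemma T_hat_sum k l (K : bilab) ji : T_hat G k l K ji =
  \sum_(phi | is_inj_hom G (bgr K) phi)
     ((map phi (bin K) == val ji.2) && (map phi (bout K) == val ji.1))%:R.
Proof.
by rewrite ffunE cardsE -sum1_card natr_sum big_mkcondr; apply: eq_bigr => phi _; case: ifP.
Qed.

Lemma T_hat_average (K : bilab) :
  #|inj_endo|%:R *: T_hat G (size (bin K)) (size (bout K)) K =
  \sum_(phi | is_inj_hom G (bgr K) phi) T_ab G _ _ (image_labels phi).
Proof.
apply/ffunP=> ji; rewrite ffunE sum_ffunE T_hat_sum.
under [RHS]eq_bigr => phi _ do rewrite /T_ab T_hat_sum /=.
rewrite [RHS]exchange_big /= -sum1_card natr_sum scaler_suml.
apply: eq_big => [psi | psi psi_hom]; first by rewrite inE.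
rewrite inE in psi_hom; have /andP[/injectiveP psi_inj _] := psi_hom.
rewrite scale1r (reindex_inj (ffun_comp_inj psi_inj)) /=.
apply: eq_big => [phi | phi _]; first by rewrite inj_hom_comp.
by rewrite !map_ffun_comp.
Qed.

End HomCounting.

Section Spanning.
Variables (G : graph) (C : bilab -> Prop).
Hypotheses (C_cat : skew_graph_category C) (C_G : C (@BL G [::] [::])).
Local Notation n := (nv G).

Lemma image_labels_in_category (K : bilab) (phi : {ffun 'I_(nv (bgr K)) -> 'I_n}) :
  C K -> is_inj_hom G (bgr K) phi -> C (@BL G (map phi (bin K)) (map phi (bout K))).
Proof.
move=> CK phi_hom; case: C_cat => _ _ _ _ [C_union _ _].
have phi_inj : injective phi by case/andP: phi_hom => /injectiveP.
have := C_union K _ CK C_G _ (overlap_graph phi_inj) G phi id (glue_inj_hom phi_hom).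
by rewrite /= !cats0.
Qed.

Lemma T_hat_in_span_T_ab k l (K : bilab) :
  C K -> size (bin K) = k -> size (bout K) = l ->
  exists2 S : seq (k.-tuple 'I_n * l.-tuple 'I_n),
    {in S, forall ab, C (@BL G (val ab.1) (val ab.2))} &
    T_hat G k l K \in <<map (T_ab G k l) S>>%VS.
Proof.
move=> CK <- <-; set homs := enum [pred phi | is_inj_hom G (bgr K) phi].
exists [seq image_labels phi | phi <- homs].
  move=> ab /mapP[phi]; rewrite mem_enum => phi_hom ->.
  exact: image_labels_in_category.
have endo_neq0 : #|inj_endo G|%:R != 0 :> algC.
  by rewrite pnatr_eq0 -lt0n; apply/card_gt0P; exists [ffun x => x]; exact: id_inj_hom.
rewrite -[T_hat _ _ _ _](scalerK endo_neq0) T_hat_average rpredZ // rpred_sum // => phi phi_hom.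
by apply/memv_span/map_f/map_f; rewrite mem_enum.
Qed.

End Spanning.

Section Orbits.
Variables (G : graph) (k l : nat).
Local Notation n := (nv G).
Implicit Types ab : k.-tuple 'I_n * l.-tuple 'I_n.

Lemma map_id_ffun (s : seq 'I_n) : map [ffun x : 'I_n => x] s = s.
Proof. by rewrite (eq_map (g := id)) ?map_id // => x; rewrite ffunE. Qed.

Lemma T_ab_diag_neq0 ab : T_ab G k l ab (ab.2, ab.1) != 0.
Proof.
rewrite ffunE pnatr_eq0 -lt0n; apply/card_gt0P; exists [ffun x => x].
by rewrite inE id_inj_hom /= !map_id_ffun !eqxx.
Qed.

Lemma T_ab_neq0_same_orbit ab ab' :
  T_ab G k l ab (ab'.2, ab'.1) != 0 -> same_orbit G k l ab ab'.
Proof.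
rewrite ffunE pnatr_eq0 -lt0n => /card_gt0P[psi]; rewrite inE /=.
case/and3P=> psi_hom /eqP psi_a /eqP psi_b.
have psi_inj : injective psi by case/andP: psi_hom => /injectiveP.
have map_perm s : map (perm psi_inj) s = map psi s by apply: eq_map => x; rewrite permE.
apply/existsP; exists (perm psi_inj); rewrite !map_perm psi_a psi_b !eqxx !andbT.
by apply/forallP=> x; apply/forallP=> y; rewrite !permE (inj_hom_reflect_edge psi_hom).
Qed.

Lemma same_orbit_refl : reflexive (same_orbit G k l).
Proof. by move=> ab; apply/T_ab_neq0_same_orbit/T_ab_diag_neq0. Qed.

Lemma same_orbit_sym : symmetric (same_orbit G k l).
Proof.
suff sym ab ab' : same_orbit G k l ab ab' -> same_orbit G k l ab' ab.
  by move=> ab ab'; apply/idP/idP; apply: sym.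
case/existsP=> s /and3P[s_aut /eqP s_a /eqP s_b]; apply/existsP; exists s^-1%g.
have map_permK t : map s^-1%g (map s t) = t by rewrite -map_comp (eq_map (permK s)) map_id.
rewrite -s_a -s_b !map_permK !eqxx !andbT; apply/forallP=> x; apply/forallP=> y.
by rewrite (eqP (forallP (forallP s_aut (s^-1%g x)) (s^-1%g y))) !permKV.
Qed.
End Orbits.

Lemma pairwise_not_in_eq (T : eqType) (r : rel T) (s : seq T) :
  symmetric r -> pairwise (fun x y => ~~ r x y) s -> {in s &, forall x y, r x y -> x = y}.
Proof.
move=> r_sym s_r; pose r' := [rel x y | (x == y) || ~~ r x y].
have r'_refl : reflexive r' by move=> x; rewrite /= eqxx.
have r'_sym : symmetric r' by move=> x y; rewrite /= eq_sym r_sym.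
have /allrelP s_r' : all2rel r' s.
  by rewrite -pairwise_all2rel //; apply: sub_pairwise s_r => x y /= ->; rewrite orbT.
by move=> x y xs ys rxy; have /orP[/eqP // | /negP] := s_r' x y xs ys.
Qed.

Theorem proposition4p13 :
  forall (C : bilab -> Prop) (G : graph),
    skew_graph_category C -> C (@BL G [::] [::]) ->
    forall k l : nat,
      (* the family T^{ab}_G, [a,b] in W^C_G(k,l), spans C^G(k,l) ... *)
      (forall v : tensor_space G k l,
         CG_space G C k l v <->
         exists s : seq (k.-tuple 'I_(nv G) * l.-tuple 'I_(nv G)),
           (forall ab, ab \in s -> C (@BL G (val ab.1) (val ab.2))) /\
           v \in <<map (T_ab G k l) s>>%VS) /\
      (* ... and is linearly independent: representatives of pairwise
         distinct classes of W^C_G(k,l) give a free family *)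
      (forall s : seq (k.-tuple 'I_(nv G) * l.-tuple 'I_(nv G)),
         (forall ab, ab \in s -> C (@BL G (val ab.1) (val ab.2))) ->
         pairwise (fun ab ab' => ~~ same_orbit G k l ab ab') s ->
         free (map (T_ab G k l) s)).
Proof.
move=> C G C_cat C_G k l; split=> [v | s _ s_orbits].
  split=> [[Ks [Ks_C v_span]] | [s [s_C v_span]]].
  - have [|S S_C /subvP sub] := @span_map_sub_span_family _ _ _
      (fun ab => C (@BL G (val ab.1) (val ab.2))) (T_ab G k l) _ (T_hat G k l) Ks.
      by move=> K /Ks_C[CK size_in size_out]; exact: T_hat_in_span_T_ab.
    by exists S; split; [exact: S_C | exact: sub v_span].
  - exists [seq @BL G (val ab.1) (val ab.2) | ab <- s]; split; last by rewrite -map_comp.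
    move=> K /List.in_map_iff[ab [<- /list_In_mem ab_s]].
    by split; [exact: s_C | rewrite /= size_tuple..].
have orbit_eq := pairwise_not_in_eq (@same_orbit_sym G k l) s_orbits.
apply: (free_map_diag (pt := fun ab => (ab.2, ab.1))).
- by apply: pairwise_uniq s_orbits => ab; rewrite /= same_orbit_refl.
- by move=> ab _; exact: T_ab_diag_neq0.
- by move=> ab ab' ab_s ab'_s /T_ab_neq0_same_orbit; exact: orbit_eq.
Qed.
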